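(* Let $d\ge 2$ and let $\rho$ be a density operator on $\mathbb{C}^d$. Suppose there exists a diagonal unitary $U$ (in the computational basis) such that $\rho'=U^\dagger\rho U$ has entries $\rho'_{ij}=|\rho_{ij}|$ for all $i,j$. Then $$C_{\mathcal{F}}(\rho)=\overline{C}_{\mathcal{R}}(\rho)=\overline{C}_{l_1}(\rho).$$
   Context: Fix the computational basis $\{|i\rangle\}_{i=0}^{d-1}$ of $\mathbb{C}^d$ as the incoherent basis. Let $\mathcal{D}(\mathbb{C}^d)$ be the set of density operators, $\Delta(\rho)=\sum_i|i\rangle\langle i|\rho|i\rangle\langle i|$, and $\mathcal{I}=\{\rho\in\mathcal{D}(\mathbb{C}^d):\rho=\Delta(\rho)\}$ the incoherent (diagonal) states. Let $|\phi^+\rangle=\frac{1}{\sqrt d}\sum_{i=0}^{d-1}|i\rangle$ and let $\mathcal{U}_d$ be the set of diagonal unitary matrices. The quantum coherence fraction is $C_{\mathcal{F}}(\rho)=\max_{U\in\mathcal{U}_d}\langle\phi^+|U^\dagger\rho U|\phi^+\rangle$ (equivalently, the maximum of $\langle\phi|\rho|\phi\rangle$ over maximally coherent states $|\phi\rangle$, i.e. states of the form $\frac1{\sqrt d}\sum_i e^{\mathrm{i}\theta_i}|i\rangle$). The $l_1$ norm of coherence is $C_{l_1}(\rho)=\sum_{i\ne j}|\rho_{ij}|$, and the robustness of coherence is $C_{\mathcal{R}}(\rho)=\min\{s\ge0: \exists\tau\in\mathcal{D}(\mathbb{C}^d),\ (\rho+s\tau)/(1+s)\in\mathcal{I}\}$.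 The normalized versions are $\overline{C}_{l_1}(\rho)=(1+C_{l_1}(\rho))/d$ and $\overline{C}_{\mathcal{R}}(\rho)=(1+C_{\mathcal{R}}(\rho))/d$. *)

From HB Require Import structures.
From mathcomp Require Import all_boot all_order all_algebra.
From mathcomp Require Import spectral sesquilinear.
From mathcomp Require Import complex.
From mathcomp Require Import boolp classical_sets reals.

Set Implicit Arguments.
Unset Strict Implicit.
Unset Printing Implicit Defensive.

Import Order.TTheory GRing.Theory Num.Theory.
Local Open Scope ring_scope.
Local Open Scope sesquilinear_scope.
Local Open Scope classical_set_scope.
Local Notation "x %:C" := (real_complex _ x) (format "x %:C").
Import ComplexField.

Section QCoherence.
Variable R : realType.
Local Notation C := (R[i]).

Definition psd (d : nat) (A : 'M[C]_d) : Prop :=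
  A ^t* = A /\ forall v : 'cV[C]_d, 0 <= (v ^t* *m A *m v) 0 0.

Definition density (d : nat) (A : 'M[C]_d) : Prop :=
  psd A /\ \tr A = 1.

Definition Delta (d : nat) (A : 'M[C]_d) : 'M[C]_d :=
  diag_mx (\row_i A i i).

Definition incoherent (d : nat) (A : 'M[C]_d) : Prop :=
  density A /\ A = Delta A.

Definition phi_plus (d : nat) : 'cV[C]_d :=
  const_mx ((Num.sqrt (d%:R : R))^-1)%:C.

Definition diag_unitary (d : nat) (U : 'M[C]_d) : Prop :=
  is_diag_mx U /\ U \is unitarymx.

(* <phi^+| U^dagger rho U |phi^+> ; real-valued for Hermitian rho,
   so we take its real part to compare in R *)
Definition fid_val (d : nat) (rho U : 'M[C]_d) : R :=
  complex.Re (((phi_plus d) ^t* *m U ^t* *m rho *m U *m phi_plus d) 0 0).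

(* quantum coherence fraction (the max is attained, so sup = max) *)
Definition C_F (d : nat) (rho : 'M[C]_d) : R :=
  sup [set x : R | exists U, diag_unitary U /\ x = fid_val rho U].

Definition C_l1 (d : nat) (rho : 'M[C]_d) : R :=
  \sum_(i < d) \sum_(j < d | j != i) ComplexField.Normc.normc (rho i j).

(* robustness of coherence (the min is attained, so inf = min) *)
Definition C_R (d : nat) (rho : 'M[C]_d) : R :=
  inf [set s : R | 0 <= s /\
        exists tau : 'M[C]_d, density tau /\
          incoherent (((1 + s)^-1)%:C *: (rho + s%:C *: tau))].

Definition C_l1_bar (d : nat) (rho : 'M[C]_d) : R := (1 + C_l1 rho) / d%:R.
Definition C_R_bar (d : nat) (rho : 'M[C]_d) : R := (1 + C_R rho) / d%:R.

End QCoherence.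

(* After the diagonal phase change U the state has entrywise nonnegative
   entries |rho_ij|.  The form X |-> <phi+|U^* X U|phi+> then reaches
   (1/d) sum_ij |rho_ij| = (1 + C_l1)/d on rho, and this is the largest value any
   maximally coherent state can reach, so C_F = (1 + C_l1)/d.  The same form is
   nonnegative on states and equals 1/d on incoherent states, which yields
   C_l1 <= C_R.  Conversely, with D the diagonal matrix of the row sums of
   |rho_ij|, the matrix D - rho is U times a weighted graph Laplacian times U^*,
   hence positive semidefinite of trace C_l1, so tau = (D - rho)/C_l1 shows
   that s = C_l1 is admissible in the definition of C_R (when C_l1 = 0, rho = D
   is itself incoherent). *)
From HB Require Import structures.
From mathcomp Require Import all_boot all_order all_algebra.
From mathcomp Require Import spectral sesquilinear.
From mathcomp Require Import complex.
From mathcomp Require Import classical_sets reals.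
From mathcomp Require Import ring.

Set Implicit Arguments.

Import Order.TTheory GRing.Theory Num.Theory.
Local Open Scope ring_scope.
Local Open Scope sesquilinear_scope.
Local Notation "x %:C" := (real_complex _ x) (format "x %:C").

Section SupInf.
Variable R : realType.
Implicit Types (E : set R) (x : R).

Lemma sup_eq_max E x : E x -> ubound E x -> sup E = x.
Proof.
move=> Ex ubx; apply/le_anti/andP; split; first by apply: ge_sup => //; exists x.
by apply: ub_le_sup => //; exists x.
Qed.

Lemma inf_eq_min E x : E x -> lbound E x -> inf E = x.
Proof.
move=> Ex lbx; apply/le_anti/andP; split; last by apply: lb_le_inf => //; exists x.
by apply: ge_inf => //; exists x.
Qed.

End SupInf.

Section DensityMatrices.
Variables (R : realType) (n : nat).
Local Notation C := R[i].
Implicit Types (A X V rho : 'M[C]_n) (v : 'cV[C]_n).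

Lemma quad_formE A v :
  (v ^t* *m A *m v) 0 0 = \sum_i \sum_j (v i 0)^* * A i j * v j 0.
Proof.
rewrite mxE exchange_big /=; apply: eq_bigr => j _.
by rewrite mxE mulr_suml; apply: eq_bigr => i _; rewrite !mxE.
Qed.

Lemma psd_diag_ge0 A i : psd A -> 0 <= A i i.
Proof.
case=> _ /(_ (delta_mx i 0)); rewrite quad_formE (bigD1 i) //= [X in _ + X]big1.
  rewrite addr0 (bigD1 i) //= [X in _ + X]big1 => [|l li].
    by rewrite !mxE !eqxx conjC1 mul1r mulr1 addr0.
  by rewrite !mxE (negbTE li) mulr0.
move=> k ki; rewrite big1 // => l _.
by rewrite !mxE (negbTE ki) conjC0 !mul0r.
Qed.

Lemma psd_diag_mx (r : 'rV[C]_n) : (forall i, 0 <= r 0 i) -> psd (diag_mx r).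
Proof.
move=> r_ge0; split.
  apply/matrixP => i j; rewrite !mxE eq_sym.
  by case: eqVneq => [->|_]; rewrite ?mulr1n ?geC0_conj ?mulr0n ?conjC0.
move=> v; rewrite quad_formE; apply: sumr_ge0 => i _; apply: sumr_ge0 => j _.
rewrite !mxE; case: eqVneq => [<-|_]; last by rewrite mulr0n mulr0 mul0r.
by rewrite mulr1n mulrAC mulr_ge0 // mulrC mul_conjC_ge0.
Qed.

Lemma psdZ (c : C) X : 0 <= c -> psd X -> psd (c *: X).
Proof.
move=> c_ge0 [X_herm X_ge0]; split.
  apply/matrixP => i j; move/matrixP/(_ i j): X_herm.
  by rewrite !mxE rmorphM /= (geC0_conj c_ge0) => ->.
by move=> v; rewrite -scalemxAr -scalemxAl mxE mulr_ge0.
Qed.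

Lemma psd_conj V X : psd X -> psd (V ^t* *m X *m V).
Proof.
move=> [X_herm X_ge0]; split.
  by rewrite !trmx_mul !map_mxM trmxCK X_herm mulmxA.
by move=> v; have := X_ge0 (V *m v); rewrite trmx_mul map_mxM !mulmxA.
Qed.

Lemma sum_laplacian_ge0 (a : 'I_n -> 'I_n -> C) (x : 'I_n -> C) :
    (forall i j, a i j = a j i) -> (forall i j, 0 <= a i j) ->
  0 <= \sum_i \sum_j a i j * ((x i)^* * x i - (x i)^* * x j).
Proof.
move=> a_sym a_ge0; set T := \sum_i _.
have T_double : T + T = \sum_i \sum_j a i j * ((x i - x j) * (x i - x j)^*).
  have -> : \sum_i \sum_j a i j * ((x i - x j) * (x i - x j)^*) =
      \sum_i \sum_j (a i j * ((x i)^* * x i - (x i)^* * x j) +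
                     a i j * ((x j)^* * x j - (x j)^* * x i)).
    by apply: eq_bigr => i _; apply: eq_bigr => j _; rewrite rmorphB /=; ring.
  under eq_bigr do rewrite big_split /=.
  rewrite big_split /=; congr (_ + _).
  rewrite exchange_big /=.
  by apply: eq_bigr => i _; apply: eq_bigr => j _; rewrite a_sym.
rewrite -(pmulrn_lge0 _ (isT : (0 < 2)%N)) mulr2n T_double.
by apply: sumr_ge0 => i _; apply: sumr_ge0 => j _; rewrite mulr_ge0 ?mul_conjC_ge0.
Qed.

Lemma psd_laplacian (A : 'M[C]_n) :
    (forall i j, A i j = A j i) -> (forall i j, 0 <= A i j) ->
  psd (diag_mx (\row_i \sum_j A i j) - A).
Proof.
move=> A_sym A_ge0; have rowsum_ge0 i : 0 <= \sum_j A i j by exact: sumr_ge0.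
split.
  apply/matrixP => i j; rewrite !mxE rmorphB /= (geC0_conj (A_ge0 j i)) A_sym.
  rewrite eq_sym; case: eqVneq => [->|_]; last by rewrite mulr0n conjC0.
  by rewrite mulr1n geC0_conj.
move=> v; rewrite quad_formE.
have -> : \sum_i \sum_j (v i 0)^* * (diag_mx (\row_i \sum_j A i j) - A) i j * v j 0
    = \sum_i \sum_j A i j * ((v i 0)^* * v i 0 - (v i 0)^* * v j 0).
  apply: eq_bigr => i _.
  under eq_bigr do rewrite !mxE mulrBr mulrBl.
  under [RHS]eq_bigr do rewrite mulrBr.
  rewrite !sumrB; congr (_ - _); last first.
    by apply: eq_bigr => j _; rewrite mulrCA mulrA.
  rewrite (bigD1 i) //= [X in _ + X]big1 => [|j ji].
    by rewrite eqxx mulr1n addr0 mulrAC mulrC mulr_suml.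
  by rewrite eq_sym (negbTE ji) mulr0 mul0r.
exact: sum_laplacian_ge0.
Qed.

Lemma density_normalize X (t : R) :
  psd X -> \tr X = t%:C -> 0 < t -> density ((t^-1)%:C *: X).
Proof.
move=> X_psd trX t_gt0; split; first by apply: psdZ; rewrite // ler0c invr_ge0 ltW.
by rewrite mxtraceZ trX -rmorphM mulVf ?gt_eqF.
Qed.

Lemma normc_ge0 (z : C) : 0 <= ComplexField.Normc.normc z.
Proof. by rewrite -ler0c; change (0 <= `|z|); exact: normr_ge0. Qed.

Lemma C_l1_ge0 rho : 0 <= C_l1 rho.
Proof. by apply: sumr_ge0 => i _; apply: sumr_ge0 => j _; apply: normc_ge0. Qed.

Lemma sum_norm_density rho :
  density rho -> \sum_i \sum_j `|rho i j| = (1 + C_l1 rho)%:C.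
Proof.
move=> [rho_psd tr_rho]; rewrite rmorphD rmorph1 -tr_rho rmorph_sum -big_split.
apply: eq_bigr => i _; rewrite rmorph_sum (bigD1 i) //=.
by rewrite ger0_norm ?psd_diag_ge0.
Qed.

Lemma C_l1_eq0_offdiag rho i j : C_l1 rho = 0 -> i != j -> rho i j = 0.
Proof.
move=> L0 ij; apply: ComplexField.Normc.eq0_normc.
have row_ge0 k : 0 <= \sum_(l | l != k) ComplexField.Normc.normc (rho k l).
  by apply: sumr_ge0 => l _; apply: normc_ge0.
have row_i := psumr_eq0P (fun k _ => row_ge0 k) L0 (i := i) isT.
by apply: (psumr_eq0P _ row_i) => [l _|]; [apply: normc_ge0 | rewrite eq_sym].
Qed.

Lemma Delta_id A : is_diag_mx A -> Delta A = A.
Proof.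
move=> /is_diag_mxP A_diag; apply/matrixP => i j; rewrite !mxE.
by case: eqVneq => [->|ij]; rewrite ?mulr1n // mulr0n A_diag.
Qed.

End DensityMatrices.

Section DiagonalUnitaries.
Variables (R : realType) (n : nat).
Local Notation C := R[i].
Implicit Types (U W X Y rho tau : 'M[C]_n).

Lemma diag_mx_mulE U X W i j : is_diag_mx U -> is_diag_mx W ->
  (U *m X *m W) i j = U i i * X i j * W j j.
Proof.
move=> /is_diag_mxP U_diag /is_diag_mxP W_diag.
rewrite mxE (bigD1 j) //= big1 ?addr0 => [|k kj]; last by rewrite W_diag ?mulr0.
congr (_ * _); rewrite mxE (bigD1 i) //= big1 ?addr0 // => k ki.
by rewrite U_diag ?mul0r // eq_sym.
Qed.

Lemma is_diag_mx_trC U : is_diag_mx U -> is_diag_mx (U ^t*).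
Proof.
move=> /is_diag_mxP U_diag; apply/is_diag_mxP => i j ij.
by rewrite !mxE U_diag ?conjC0 // eq_sym.
Qed.

Lemma diag_adj_mulE U X i j :
  is_diag_mx U -> (U ^t* *m X *m U) i j = (U i i)^* * X i j * U j j.
Proof. by move=> U_diag; rewrite diag_mx_mulE ?mxE // is_diag_mx_trC. Qed.

Lemma diag_mul_adjE U X i j :
  is_diag_mx U -> (U *m X *m U ^t*) i j = U i i * X i j * (U j j)^*.
Proof. by move=> U_diag; rewrite diag_mx_mulE ?mxE // is_diag_mx_trC. Qed.

Lemma diag_unitary_mulC U i : diag_unitary U -> U i i * (U i i)^* = 1.
Proof.
move=> [U_diag /unitarymxP UU]; have := congr1 (fun M : 'M[C]_n => M i i) UU.
rewrite !mxE eqxx /= => UUii; rewrite -[RHS]UUii.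
rewrite (bigD1 i) //= big1 ?addr0 ?mxE // => k ki.
by rewrite (is_diag_mxP U_diag) ?mul0r // eq_sym.
Qed.

Lemma diag_unitary_norm U i : diag_unitary U -> `|U i i| = 1.
Proof.
move=> U_unitary; apply/eqP; rewrite -sqrp_eq1 ?normr_ge0 // normCK.
by rewrite diag_unitary_mulC.
Qed.

Definition fid_form U X : C :=
  ((phi_plus R n) ^t* *m U ^t* *m X *m U *m phi_plus R n) 0 0.

Lemma fid_valE rho U : fid_val rho U = complex.Re (fid_form U rho).
Proof. by []. Qed.

Lemma phi_plus_formE X :
  ((phi_plus R n) ^t* *m X *m phi_plus R n) 0 0 =
  (n%:R^-1)%:C * \sum_i \sum_j X i j.
Proof.
rewrite quad_formE mulr_sumr; apply: eq_bigr => i _.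
rewrite mulr_sumr; apply: eq_bigr => j _.
rewrite !mxE geC0_conj ?ler0c ?invr_ge0 ?sqrtr_ge0 //.
by rewrite mulrC mulrA -rmorphM -expr2 exprVn sqr_sqrtr ?ler0n.
Qed.

Lemma fid_formE U X : is_diag_mx U ->
  fid_form U X = (n%:R^-1)%:C * \sum_i \sum_j (U i i)^* * X i j * U j j.
Proof.
move=> U_diag; rewrite /fid_form.
have -> : (phi_plus R n) ^t* *m U ^t* *m X *m U *m phi_plus R n =
    (phi_plus R n) ^t* *m (U ^t* *m X *m U) *m phi_plus R n by rewrite !mulmxA.
rewrite phi_plus_formE; congr (_ * _).
by apply: eq_bigr => i _; apply: eq_bigr => j _; rewrite diag_adj_mulE.
Qed.

Lemma fid_formD U X Y : fid_form U (X + Y) = fid_form U X + fid_form U Y.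
Proof. by rewrite /fid_form mulmxDr !mulmxDl mxE. Qed.

Lemma fid_formZ U c X : fid_form U (c *: X) = c * fid_form U X.
Proof. by rewrite /fid_form -scalemxAr -!scalemxAl mxE. Qed.

Lemma fid_form_ge0 U X : psd X -> 0 <= fid_form U X.
Proof.
case=> _ X_ge0; have := X_ge0 (U *m phi_plus R n).
by rewrite trmx_mul map_mxM !mulmxA.
Qed.

Lemma fid_form_diag U X : diag_unitary U -> is_diag_mx X ->
  fid_form U X = (n%:R^-1)%:C * \tr X.
Proof.
move=> U_unitary /is_diag_mxP X_diag.
rewrite fid_formE; last by case: U_unitary.
congr (_ * _); apply: eq_bigr => i _.
rewrite (bigD1 i) //= big1 ?addr0 => [|j ji]; last first.
  by rewrite X_diag ?mulr0 ?mul0r // eq_sym.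
by rewrite mulrAC [_^* * _]mulrC diag_unitary_mulC ?mul1r.
Qed.

Lemma norm_fid_form_le U X : diag_unitary U ->
  `|fid_form U X| <= (n%:R^-1)%:C * \sum_i \sum_j `|X i j|.
Proof.
move=> U_unitary; have n_inv_ge0 : 0 <= (n%:R^-1 : R)%:C.
  by rewrite ler0c invr_ge0 ler0n.
rewrite fid_formE; last by case: U_unitary.
rewrite normrM ger0_norm // ler_wpM2l //.
apply: le_trans (ler_norm_sum _ _ _) _; apply: ler_sum => i _.
apply: le_trans (ler_norm_sum _ _ _) _; apply: ler_sum => j _.
by rewrite !normrM norm_conjC !diag_unitary_norm // mul1r mulr1.
Qed.

Lemma Re_le_norm (z : C) : (complex.Re z)%:C <= `|z|.
Proof. by apply: le_trans (normc_ge_Re z); rewrite lecR ler_norm. Qed.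

Lemma fid_val_le_l1 rho U : density rho -> diag_unitary U ->
  fid_val rho U <= (1 + C_l1 rho) / n%:R.
Proof.
move=> rho_density U_unitary; rewrite fid_valE -lecR.
apply: le_trans (Re_le_norm _) (le_trans (norm_fid_form_le _ U_unitary) _).
by rewrite sum_norm_density // -rmorphM mulrC.
Qed.

Lemma fid_val_le_robust rho U s tau : diag_unitary U -> 0 <= s -> psd tau ->
    incoherent (((1 + s)^-1)%:C *: (rho + s%:C *: tau)) ->
  fid_val rho U <= (1 + s) / n%:R.
Proof.
move=> U_unitary s_ge0 tau_psd [[_ tr_delta] delta_Delta].
set delta := _ *: _ in tr_delta delta_Delta.
have delta_diag : is_diag_mx delta by rewrite delta_Delta diag_mx_is_diag.
have rho_mix : rho = (1 + s)%:C *: delta + (- s%:C) *: tau.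
  rewrite /delta scalerA -rmorphM mulfV ?scale1r ?scaleNr ?addrK //.
  by rewrite gt_eqF // ltr_wpDr.
have : fid_form U rho <= ((1 + s) / n%:R)%:C.
  rewrite {1}rho_mix fid_formD (fid_formZ _ _ delta) (fid_formZ _ _ tau).
  rewrite (fid_form_diag _ U_unitary delta_diag) tr_delta mulr1.
  by rewrite -rmorphM mulrC mulNr gerBl mulr_ge0 ?ler0c ?fid_form_ge0.
by rewrite fid_valE lecE => /andP[_].
Qed.

End DiagonalUnitaries.

Arguments fid_form {R n} U X.

Section NonnegativeUpToDiagonalPhase.
Variables (R : realType) (d : nat) (rho U : 'M[R[i]]_d).
Hypotheses (rho_density : density rho) (U_unitary : diag_unitary U).
Hypothesis rho_abs : forall i j, (U ^t* *m rho *m U) i j = `|rho i j|.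

Local Notation L := (C_l1 rho).
Local Notation A := (\matrix_(i, j) `|rho i j| : 'M[R[i]]_d).
Local Notation D := (diag_mx (\row_i \sum_j A i j)).

Let U_diag : is_diag_mx U. Proof. by case: U_unitary. Qed.

Lemma rho_phaseE i j : rho i j = U i i * `|rho i j| * (U j j)^*.
Proof.
rewrite -rho_abs diag_adj_mulE // !mulrA diag_unitary_mulC // mul1r.
by rewrite -mulrA diag_unitary_mulC // mulr1.
Qed.

Lemma fid_val_abs : fid_val rho U = (1 + L) / d%:R.
Proof.
rewrite fid_valE; suff -> : fid_form U rho = ((1 + L) / d%:R)%:C by [].
rewrite fid_formE // rmorphM /= [RHS]mulrC -sum_norm_density //; congr (_ * _).
by apply: eq_bigr => i _; apply: eq_bigr => j _; rewrite -diag_adj_mulE.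
Qed.

Lemma C_F_abs : C_F rho = (1 + L) / d%:R.
Proof.
apply: sup_eq_max; first by exists U; rewrite fid_val_abs.
by move=> _ [V [V_unitary ->]]; exact: fid_val_le_l1.
Qed.

Lemma abs_mx_sym i j : A i j = A j i.
Proof.
case: rho_density => -[rho_herm _] _.
have := congr1 (fun M : 'M[R[i]]_d => M j i) rho_herm.
by rewrite !mxE => <-; rewrite norm_conjC.
Qed.

Lemma D_sub_rhoE : D - rho = U *m (D - A) *m U ^t*.
Proof.
apply/matrixP => i j; rewrite diag_mul_adjE // !mxE {1}(rho_phaseE i j).
rewrite mulrBr mulrBl; congr (_ - _).
case: eqVneq => [<-|_]; last by rewrite mulr0n mulr0 mul0r.
by rewrite mulr1n mulrAC diag_unitary_mulC // mul1r.
Qed.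

Lemma psd_D_sub_rho : psd (D - rho).
Proof.
rewrite D_sub_rhoE -{1}(trmxCK U); apply: psd_conj; apply: psd_laplacian.
  exact: abs_mx_sym.
by move=> i j; rewrite mxE normr_ge0.
Qed.

Lemma psd_D : psd D.
Proof.
apply: psd_diag_mx => i; rewrite mxE; apply: sumr_ge0 => j _.
by rewrite mxE normr_ge0.
Qed.

Lemma tr_D : \tr D = (1 + L)%:C.
Proof.
rewrite mxtrace_diag -sum_norm_density //; apply: eq_bigr => i _.
by rewrite mxE; apply: eq_bigr => j _; rewrite mxE.
Qed.

Lemma rho_eq_D : L = 0 -> rho = D.
Proof.
move=> L0; apply/matrixP => i j; rewrite !mxE.
case: eqVneq => [<-|ij]; last by rewrite mulr0n C_l1_eq0_offdiag.
rewrite mulr1n (bigD1 i) //= big1 => [|k ki]; last first.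
  by rewrite mxE C_l1_eq0_offdiag ?normr0 // eq_sym.
case: rho_density => rho_psd _.
by rewrite mxE addr0 ger0_norm // psd_diag_ge0.
Qed.

Lemma robustness_witness : exists tau, density tau /\ rho + L%:C *: tau = D.
Proof.
have [L0|L_neq0] := eqVneq L 0.
  by exists rho; split => //; rewrite L0 rmorph0 scale0r addr0; exact: rho_eq_D.
have L_gt0 : 0 < L by rewrite lt_def L_neq0 C_l1_ge0.
exists ((L^-1)%:C *: (D - rho)); split.
  apply: density_normalize psd_D_sub_rho _ L_gt0.
  case: rho_density => _ tr_rho.
  by rewrite raddfB /= tr_D tr_rho rmorphD rmorph1 addrAC subrr add0r.
by rewrite scalerA -rmorphM mulfV // scale1r addrC subrK.
Qed.

Lemma C_l1_robust_feasible :
  0 <= L /\ exists tau, density tau /\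
    incoherent (((1 + L)^-1)%:C *: (rho + L%:C *: tau)).
Proof.
split; first exact: C_l1_ge0.
have [tau [tau_density rho_tau]] := robustness_witness.
exists tau; rewrite rho_tau; split => //.
have L1_gt0 : 0 < 1 + L by apply: ltr_wpDr => //; exact: C_l1_ge0.
split; first exact: density_normalize psd_D tr_D L1_gt0.
rewrite Delta_id //; apply/is_diag_mxP => i j ij.
by rewrite !mxE -val_eqE (negbTE ij) mulr0n mulr0.
Qed.

Lemma C_R_abs : (0 < d)%N -> C_R rho = L.
Proof.
move=> d_gt0; apply: inf_eq_min; first exact: C_l1_robust_feasible.
move=> s [s_ge0 [tau [[tau_psd _] delta_incoherent]]].
have := fid_val_le_robust U_unitary s_ge0 tau_psd delta_incoherent.
by rewrite fid_val_abs ler_pM2r ?invr_gt0 ?ltr0n // lerD2l.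
Qed.

End NonnegativeUpToDiagonalPhase.

Theorem theorem1 (R : realType) (d : nat) (hd : (2 <= d)%N)
  (rho : 'M[R[i]]_d) (hrho : density rho)
  (hU : exists U : 'M[R[i]]_d, diag_unitary U /\
          forall i j, (U ^t* *m rho *m U) i j = `|rho i j|) :
  C_F rho = C_R_bar rho /\ C_R_bar rho = C_l1_bar rho.
Proof.
have [U [U_unitary rho_abs]] := hU.
have d_gt0 : (0 < d)%N by apply: leq_trans hd.
rewrite /C_R_bar /C_l1_bar (C_F_abs hrho U_unitary rho_abs).
by rewrite (C_R_abs hrho U_unitary rho_abs d_gt0).
Qed.
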